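(* For every finite non-empty set $S \subseteq \mathbb{R}^m$, we have \[ |\mathcal{D}(\mathrm{pyr}(S))| = |\mathcal{D}(S)| + 2|S| \quad\text{and}\quad \Delta(\mathcal{D}(\mathrm{pyr}(S))) = \Delta(\mathcal{D}(S)). \]
   Context: For a finite set $S\subseteq\mathbb{R}^m$, its difference set is $\mathcal{D}(S) = S - S = \{a-b : a,b\in S\}$, and its pyramid is $\mathrm{pyr}(S) = (S\times\{0\})\cup\{e_{m+1}\}\subseteq\mathbb{R}^{m+1}$, where $e_{m+1}$ is the $(m+1)$-st unit vector. For a finite set $T\subseteq\mathbb{R}^d$, $\Delta(T) = \max\{|\det(T')| : T'\subseteq T,\ |T'|=d\}$, where $\det(T')$ is the determinant of the $d\times d$ matrix whose columns are the elements of $T'$ (so $\Delta(\mathcal{D}(S))$ is taken in dimension $m$ and $\Delta(\mathcal{D}(\mathrm{pyr}(S)))$ in dimension $m+1$). *)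

From HB Require Import structures.
From mathcomp Require Import all_boot all_order all_algebra.
From mathcomp Require Import finmap.
From mathcomp Require Import reals.
Set Implicit Arguments. Unset Strict Implicit. Unset Printing Implicit Defensive.
Import Order.TTheory GRing.Theory Num.Theory.
Local Open Scope ring_scope.
Local Open Scope fset_scope.

Definition diffset (R : realType) (m : nat) (S : {fset 'rV[R]_m}) : {fset 'rV[R]_m} :=
  [fset a - b | a in S, b in S].

Definition pyr (R : realType) (m : nat) (S : {fset 'rV[R]_m}) : {fset 'rV[R]_(m + 1)} :=
  [fset row_mx v (0 : 'rV[R]_1) | v in S] `|` [fset row_mx (0 : 'rV[R]_m) (const_mx 1)].

(* Delta(T) = max |det T'| over d-element subsets T' of T (columns = elements).
   Enumerated via injective maps 'I_d -> T (column order does not affect |det|);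
   an empty maximum (|T| < d) is 0. *)
Definition Delta (R : realType) (d : nat) (T : {fset 'rV[R]_d}) : R :=
  \big[Order.max/0]_(f : {ffun 'I_d -> T} | injectiveb f)
     `|\det (\matrix_(i < d, j < d) (val (f j)) 0 i)|.

(* In D(pyr S) the last coordinate of a difference is 0, 1 or -1, and the three
   layers are D(S) x {0}, (-S) x {1} and S x {-1}; this gives the cardinality.
   For Delta: if some row (a_k, c_k) of a matrix with rows (a_j, c_j) in D(pyr S)
   has c_k = +-1, clearing the last column with it leaves, up to sign, the m x m
   determinant of the rows a_j - c_j c_k a_k, which lie in D(S) again.
   Conversely, m rows of D(S) padded with 0 and completed by e_{m+1} - (v, 0),
   v in S, form a block-triangular matrix with the same determinant. *)

From HB Require Import structures.
From mathcomp Require Import all_boot all_order all_algebra.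
From mathcomp Require Import finmap.
From mathcomp Require Import reals.
From mathcomp Require Import perm.
Set Implicit Arguments.
Unset Strict Implicit.
Unset Printing Implicit Defensive.

Import Order.TTheory GRing.Theory Num.Theory.
Local Open Scope ring_scope.
Local Open Scope fset_scope.

Lemma cardfsU_disjoint (K : choiceType) (A B : {fset K}) :
  [disjoint A & B] -> #|` A `|` B| = (#|` A| + #|` B|)%N.
Proof. by move=> /disjoint_fsetI0 AB0; rewrite -cardfsUI AB0 cardfs0 addn0. Qed.

Lemma norm_det_row_perm (R : numDomainType) n (s : 'S_n) (M : 'M[R]_n) :
  `|\det (row_perm s M)| = `|\det M|.
Proof. by rewrite row_permE det_mulmx det_perm normrM normrX normrN1 expr1n mul1r. Qed.

Lemma det_pivot_last (R : fieldType) n (A : 'M[R]_(n + 1, n)) (c : 'cV[R]_(n + 1)) :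
  let ck := c (rshift n ord0) 0 in ck != 0 ->
  \det (row_mx A c) = ck * \det (usubmx (A - c *m (ck^-1 *: dsubmx A))).
Proof.
move=> ck ck0; set B := A - _.
have dc : dsubmx c = ck%:M.
  by apply/matrixP => i j; rewrite (ord1 i) (ord1 j) !mxE.
have dB : dsubmx B = 0.
  by rewrite /B linearB /= -mul_dsub_mx dc mul_scalar_mx scalerA divff // scale1r subrr.
have -> : row_mx A c = row_mx B c *m block_mx 1%:M 0 (ck^-1 *: dsubmx A) 1%:M.
  by rewrite mul_row_block !mulmx1 !mulmx0 add0r subrK.
rewrite det_mulmx det_lblock !det1 !mulr1.
have -> : row_mx B c = block_mx (usubmx B) (usubmx c) 0 ck%:M.
  by rewrite -dB -dc block_mxEh !vsubmxK.
by rewrite det_ublock det_scalar1 mulrC.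
Qed.

Lemma norm_det_pivot (R : numFieldType) n (A : 'M[R]_(n + 1, n)) (c : 'cV[R]_(n + 1)) k :
  c k 0 != 0 ->
  exists s : 'I_n -> 'I_(n + 1),
    `|\det (row_mx A c)|
      = `|c k 0| * `|\det (\matrix_i (row (s i) A - (c (s i) 0 / c k 0) *: row k A))|.
Proof.
move=> ck0; pose P := tperm k (rshift n ord0); exists (P \o lshift 1).
have cP : row_perm P c (rshift n ord0) 0 = c k 0 by rewrite mxE tpermR.
rewrite -(norm_det_row_perm P (row_mx A c)) row_permE mul_mx_row -!row_permE.
rewrite det_pivot_last cP // normrM; congr (_ * `|\det _|).
by apply/matrixP => i j; rewrite !mxE big_ord1 !mxE /= tpermR mulrA.
Qed.

Section Delta.
Variables (R : realType) (n : nat).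
Implicit Types (T : {fset 'rV[R]_n}) (M : 'M[R]_n).

Lemma Delta_ge0 T : 0 <= Delta T.
Proof. exact: bigmax_ge_id. Qed.

Lemma norm_det_le_Delta T M : (forall i, row i M \in T) -> `|\det M| <= Delta T.
Proof.
move=> MT; have [/injectiveP rowM_inj | /injectivePn [i1 [i2 i12 eqM]]] :=
  boolP (injectiveb (fun i => row i M)); last first.
  rewrite (determinant_alternate i12) ?normr0 ?Delta_ge0 // => j.
  by have := congr1 (fun r : 'rV_n => r 0 j) eqM; rewrite !mxE => ->.
pose f : {ffun 'I_n -> T} := [ffun i => [` MT i]].
have f_inj : injectiveb f.
  by apply/injectiveP => i1 i2 /(congr1 val); rewrite !ffunE /= => /rowM_inj.
suff -> : \det M = \det (\matrix_(i, j) val (f j) 0 i) by exact: le_bigmax_cond.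
by rewrite -det_tr; congr (\det _); apply/matrixP => i j; rewrite !mxE ffunE mxE.
Qed.

Lemma Delta_le T x :
  0 <= x -> (forall M, (forall i, row i M \in T) -> `|\det M| <= x) -> Delta T <= x.
Proof.
move=> x0 detT; apply: bigmax_le => // f _.
rewrite -det_tr (_ : _^T = \matrix_i val (f i)).
  by apply: detT => i; rewrite rowK (valP (f i)).
by apply/matrixP => i j; rewrite !mxE.
Qed.

End Delta.

Section Pyramid.
Variable R : realType.

Definition at_height n (c : R) (A : {fset 'rV[R]_n}) : {fset 'rV[R]_(n + 1)} :=
  [fset row_mx a (const_mx c) | a in A].

Lemma row_mx_const_subr n (a b : 'rV[R]_n) (c d : R) :
  row_mx a (const_mx c) - row_mx b (const_mx d)
    = row_mx (a - b) (const_mx (c - d) : 'rV_1).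
Proof. by rewrite opp_row_mx add_row_mx; congr row_mx; apply/matrixP => i j; rewrite !mxE. Qed.

Lemma mem_at_height n c c' (a : 'rV[R]_n) A :
  (row_mx a (const_mx c) \in at_height c' A) = (c == c') && (a \in A).
Proof.
apply/imfsetP/andP => [[b bA /eq_row_mx [-> /matrixP /(_ 0 0)]] | [/eqP -> aA]].
  by rewrite !mxE => ->.
by exists a.
Qed.

Lemma card_at_height n c (A : {fset 'rV[R]_n}) : #|` at_height c A| = #|` A|.
Proof. by apply: card_imfset => a b /eq_row_mx []. Qed.

Lemma fdisjoint_at_height n c c' (A B : {fset 'rV[R]_n}) :
  c != c' -> [disjoint at_height c A & at_height c' B].
Proof.
by move=> cc'; apply/fdisjointP => _ /imfsetP [a _ ->]; rewrite mem_at_height (negbTE cc').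
Qed.

Lemma mem_diffset n (S : {fset 'rV[R]_n}) a b : a \in S -> b \in S -> a - b \in diffset S.
Proof. exact: in_imfset2. Qed.

Variables (m : nat) (S : {fset 'rV[R]_m}).

Lemma pyrE : pyr S = at_height 0 S `|` [fset row_mx 0 (const_mx 1)].
Proof. by []. Qed.

Lemma base_in_pyr v : v \in S -> row_mx v (const_mx 0) \in pyr S.
Proof. by move=> vS; rewrite pyrE inE mem_at_height eqxx vS. Qed.

Lemma apex_in_pyr : row_mx 0 (const_mx 1) \in pyr S.
Proof. by rewrite pyrE !inE eqxx orbT. Qed.

Hypothesis S_neq0 : S != fset0.

Lemma diffset_pyr :
  diffset (pyr S)
    = at_height 0 (diffset S) `|` at_height 1 [fset - v | v in S] `|` at_height (-1) S.
Proof.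
have [v0 v0S] := fset0Pn _ S_neq0.
apply/fsetP => u; apply/imfset2P/idP => [[p pP [q qP ->]] | ].
  rewrite pyrE in pP qP.
  case/fsetUP: pP => [/imfsetP [a aS ->] | /fset1P ->];
    case/fsetUP: qP => [/imfsetP [b bS ->] | /fset1P ->];
    rewrite row_mx_const_subr !inE !mem_at_height ?subrr ?subr0 ?sub0r eqxx.
  - by rewrite mem_diffset.
  - by rewrite aS !orbT.
  - by rewrite in_imfset ?orbT.
  - by rewrite -(subrr v0) mem_diffset.
case/fsetUP => [/fsetUP [] | ] /imfsetP [a aA ->].
- case/imfset2P: aA => [x xS [y yS ->]].
  exists (row_mx x (const_mx 0)); first exact: base_in_pyr.
  exists (row_mx y (const_mx 0)); first exact: base_in_pyr.
  by rewrite row_mx_const_subr subrr.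
- case/imfsetP: aA => [v vS ->].
  exists (row_mx 0 (const_mx 1)); first exact: apex_in_pyr.
  exists (row_mx v (const_mx 0)); first exact: base_in_pyr.
  by rewrite row_mx_const_subr sub0r subr0.
- exists (row_mx a (const_mx 0)); first exact: base_in_pyr.
  exists (row_mx 0 (const_mx 1)); first exact: apex_in_pyr.
  by rewrite row_mx_const_subr sub0r subr0.
Qed.

Lemma card_diffset_pyr : #|` diffset (pyr S)| = (#|` diffset S| + 2 * #|` S|)%N.
Proof.
have heights_neq : [/\ (0 : R) != 1, (0 : R) != -1 & (1 : R) != -1].
  by rewrite !(eq_sym 0) oppr_eq0 oner_eq0 -subr_eq0 opprK (pnatr_eq0 R 2).
case: heights_neq => n01 n0N n1N.
rewrite diffset_pyr !cardfsU_disjoint ?fdisjointUX ?fdisjoint_at_height //.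
rewrite !card_at_height card_imfset //=; last exact: oppr_inj.
by rewrite mul2n -addnn addnA.
Qed.

Lemma mem_diffset_pyr a c :
  (row_mx a (const_mx c) \in diffset (pyr S))
    = [|| (c == 0) && (a \in diffset S), (c == 1) && (- a \in S) | (c == -1) && (a \in S)].
Proof.
have memN : (a \in [fset - v | v in S]) = (- a \in S).
  by rewrite -{1}(opprK a) mem_imfset //; exact: oppr_inj.
by rewrite diffset_pyr !inE !mem_at_height memN -orbA.
Qed.

Lemma mem_diffset_pyr_pivot a c a' c' :
  row_mx a (const_mx c) \in diffset (pyr S) ->
  row_mx a' (const_mx c') \in diffset (pyr S) -> c' != 0 ->
  a - (c / c') *: a' \in diffset S.
Proof.
rewrite !mem_diffset_pyr => /or3P [] /andP [/eqP -> ha] /or3P [] /andP [/eqP -> ha'];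
  rewrite ?eqxx // => _.
- by rewrite mul0r scale0r subr0.
- by rewrite mul0r scale0r subr0.
- by rewrite divr1 scale1r (_ : a - a' = - a' - - a) ?mem_diffset // opprK addrC.
- by rewrite invrN1 mul1r scaleN1r (_ : a - - a' = a' - - a) ?mem_diffset // !opprK addrC.
- by rewrite divr1 scaleN1r mem_diffset.
- by rewrite invrN1 mulrNN mulr1 scale1r mem_diffset.
Qed.

Lemma norm_height_diffset_pyr a c :
  row_mx a (const_mx c) \in diffset (pyr S) -> c != 0 -> `|c| = 1.
Proof.
by rewrite mem_diffset_pyr => /or3P [] /andP [/eqP -> _]; rewrite ?eqxx ?normrN ?normr1.
Qed.

Lemma Delta_diffset_pyr_le : Delta (diffset (pyr S)) <= Delta (diffset S).
Proof.
apply: Delta_le => [|M MD]; first exact: Delta_ge0.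
set A := lsubmx M; set c := rsubmx M.
have rowM j : row j M = row_mx (row j A) (const_mx (c j 0)).
  rewrite -{1}(hsubmxK M) row_row_mx; congr row_mx;
  by apply/matrixP => i l; rewrite !ord1 !mxE.
have memM j : row_mx (row j A) (const_mx (c j 0)) \in diffset (pyr S) by rewrite -rowM.
rewrite -(hsubmxK M) -/A -/c.
have [k ck0 | c0] := pickP (fun k => c k 0 != 0).
  have [s ->] := norm_det_pivot A ck0.
  rewrite (norm_height_diffset_pyr (memM k) ck0) mul1r.
  apply: norm_det_le_Delta => i; rewrite rowK.
  exact: mem_diffset_pyr_pivot (memM _) (memM _) ck0.
rewrite (expand_det_col _ (rshift m ord0)) big1 ?normr0 ?Delta_ge0 // => i _.
by rewrite row_mxEr (eqP (negbFE (c0 i))) mul0r.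
Qed.

Lemma Delta_diffset_le_pyr : Delta (diffset S) <= Delta (diffset (pyr S)).
Proof.
have [v0 v0S] := fset0Pn _ S_neq0.
apply: Delta_le => [|G GD]; first exact: Delta_ge0.
have := @norm_det_le_Delta _ _ (diffset (pyr S)) (block_mx G (const_mx 0) (- v0) (const_mx 1)).
rewrite det_lblock det_mx11 mxE mulr1; apply=> i.
rewrite block_mxEv; case: (split_ordP i) => j ->.
  by rewrite rowKu row_row_mx row_const mem_diffset_pyr eqxx GD.
by rewrite rowKd row_row_mx row_const ord1 row_id mem_diffset_pyr eqxx opprK v0S !orbT.
Qed.

Lemma Delta_diffset_pyr : Delta (diffset (pyr S)) = Delta (diffset S).
Proof. by apply/le_anti; rewrite Delta_diffset_pyr_le Delta_diffset_le_pyr. Qed.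

End Pyramid.

Theorem lemma5p4 (R : realType) (m : nat) (S : {fset 'rV[R]_m}) :
  S != fset0 ->
  #|` diffset (pyr S)| = (#|` diffset S| + 2 * #|` S|)%N /\
  Delta (diffset (pyr S)) = Delta (diffset S).
Proof. by move=> S_neq0; split; [exact: card_diffset_pyr | exact: Delta_diffset_pyr]. Qed.
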